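(* For all integers $n\ge1$ the following hold in the $q$-shuffle algebra $\mathbb V$: $$\sum_{k=0}^n G_k\star\tilde G_{n-k}\,q^{n-2k}=q\sum_{k=0}^{n-1}W_{-k}\star W_{n-k}\,q^{n-1-2k},$$ $$\sum_{k=0}^n G_k\star\tilde G_{n-k}\,q^{2k-n}=q\sum_{k=0}^{n-1}W_{n-k}\star W_{-k}\,q^{n-1-2k},$$ $$\sum_{k=0}^n \tilde G_k\star G_{n-k}\,q^{n-2k}=q\sum_{k=0}^{n-1}W_{n-k}\star W_{-k}\,q^{2k+1-n},$$ $$\sum_{k=0}^n \tilde G_k\star G_{n-k}\,q^{2k-n}=q\sum_{k=0}^{n-1}W_{-k}\star W_{n-k}\,q^{2k+1-n}.$$
   Context: Let $\mathbb F$ be a field and let $q\in\mathbb F$ be nonzero and not a root of unity. Let $\mathbb V$ be the free associative $\mathbb F$-algebra on noncommuting $x,y$, with basis the words (including $1$). Juxtaposition denotes concatenation. Set $\langle x,x\rangle=\langle y,y\rangle=2$ and $\langle x,y\rangle=\langle y,x\rangle=-2$. The $q$-shuffle product $\star$ is the bilinear product determined as follows: - $1\star v=v\star 1=v$; - for nontrivial words $u=u_1\cdots u_r$ and $v=v_1\cdots v_s$, $$u\star v=u_1((u_2\cdots u_r)\star v)+v_1(u\star(v_2\cdots v_s))q^{\langle u_1,v_1\rangle+\cdots+\langle u_r,v_1\rangle}.$$ This makes $\mathbb V$ an associative algebra, the $q$-shuffle algebra. For $k\in\mathbb N$: - $W_{-k}=xyx\cdots x$ is the alternating word of length $2k+1$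 beginning and ending with $x$; - $W_{k+1}=yxy\cdots y$ is the alternating word of length $2k+1$ beginning and ending with $y$; - $G_k=yxyx\cdots yx$ is the word of length $2k$; - $\tilde G_k=xyxy\cdots xy$ is the word of length $2k$; - $G_0=\tilde G_0=1$. *)

From mathcomp Require Import all_boot all_order all_algebra.
Set Implicit Arguments. Unset Strict Implicit. Unset Printing Implicit Defensive.
Import Order.TTheory GRing.Theory Num.Theory.
Local Open Scope ring_scope.

(* Letters: false = x, true = y.  Words = seq bool (concatenation = ++). *)
Definition word := seq bool.

Definition qform (a b : bool) : int := if a == b then (2%N)%:Z else - (2%N)%:Z.

Definition qwt (u : word) (b : bool) : int := \sum_(a <- u) qform a b.

Section QShuffle.
Variable F : fieldType.
Variable q : F.

(* An element of the free algebra V = a formal F-linear combination of words,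
   represented by a finite list of (coefficient, word) pairs; two lists
   represent the same element iff all their coefficients [coefV] agree. *)
Definition V := seq (F * word).

Definition coefV (X : V) (w : word) : F := \sum_(p <- X | p.2 == w) p.1.

Definition eqV (X Y : V) : Prop := forall w, coefV X w = coefV Y w.

Definition wordV (w : word) : V := [:: (1, w)].
Definition addV (X Y : V) : V := X ++ Y.
Definition scaleV (c : F) (X : V) : V := [seq (c * p.1, p.2) | p <- X].
Definition sumV (n : nat) (f : nat -> V) : V := flatten [seq f k | k <- iota 0 n].

Fixpoint qsh (u : word) : word -> V :=
  match u with
  | [::] => fun v => [:: (1, v)]
  | a :: u' =>
      fix qsh2 (v : word) : V :=
        match v with
        | [::] => [:: (1, a :: u')]
        | b :: v' =>
            [seq (p.1, a :: p.2) | p <- qsh u' v]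
            ++ [seq (p.1 * q ^ qwt (a :: u') b, b :: p.2) | p <- qsh2 v']
        end
  end.

Definition starV (X Y : V) : V :=
  flatten [seq flatten [seq [seq (p.1 * r.1 * s.1, s.2) | s <- qsh p.2 r.2]
                           | r <- Y] | p <- X].

End QShuffle.
Arguments wordV {F} w.
Arguments sumV {F} n f.

(* W_{-k} = xyx...x of length 2k+1 *)
Definition Wneg (k : nat) : word := mkseq (fun i => odd i) (2 * k + 1).
(* W_{k+1} = yxy...y of length 2k+1 *)
Definition Wpos1 (k : nat) : word := mkseq (fun i => ~~ odd i) (2 * k + 1).
(* G_k = yxyx...yx of length 2k *)
Definition G (k : nat) : word := mkseq (fun i => ~~ odd i) (2 * k).
(* tilde G_k = xyxy...xy of length 2k *)
Definition Gt (k : nat) : word := mkseq (fun i => odd i) (2 * k).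

(* Write S(u, v; w) for the coefficient of the word w in u * v.  Reading off
   the leftmost letter c of w gives
     S(u, v; c w) = [u = c u'] S(u', v; w) + [v = c v'] q^<u,c> S(u, v'; w),
   and <G_k, c> = <G~_k, c> = 0, <W_-k, c> = <x, c>, <W_k+1, c> = <y, c>.
   Applied to the weighted convolutions sum_k r^k f_k * g_(n-k) of the
   alternating words, this expresses the coefficient at c w of each
   convolution through convolutions of the same four families at w.
   For r = q^-2 the two sides of the first and third identities then have
   the same coefficients outright.  For r = q^2 the second and fourth
   identities hold jointly with the commutation relations
     sum_k q^2k G_k * W_(m-k+1) = sum_k q^2k W_(k+1) * G_(m-k)
   and its mirror image under x <-> y, by induction on the length of w.
   The theorem rescales these by powers of q, reversing the summation in the
   second and third identities. *)

From mathcomp Require Import all_boot all_order all_algebra.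
From mathcomp Require Import zify.
Set Implicit Arguments. Unset Strict Implicit. Unset Printing Implicit Defensive.
Import GRing.Theory Num.Theory.
Local Open Scope ring_scope.

Lemma mkseq_cons T (f : nat -> T) n :
  mkseq f n.+1 = f 0%N :: mkseq (fun i => f i.+1) n.
Proof. by rewrite /mkseq /= -[1%N]/(1 + 0)%N iotaDl -map_comp. Qed.

Lemma G_succ k : G k.+1 = true :: Wneg k.
Proof.
rewrite /G /Wneg mulnS add2n -addn1 mkseq_cons.
by congr (_ :: _); apply: eq_mkseq => i /=; rewrite negbK.
Qed.

Lemma Gt_succ k : Gt k.+1 = false :: Wpos1 k.
Proof. by rewrite /Gt /Wpos1 mulnS add2n -addn1 mkseq_cons. Qed.

Lemma Wneg_cons k : Wneg k = false :: G k.
Proof. by rewrite /Wneg addn1 mkseq_cons. Qed.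

Lemma Wpos1_cons k : Wpos1 k = true :: Gt k.
Proof.
rewrite /Wpos1 addn1 mkseq_cons.
by congr (_ :: _); apply: eq_mkseq => i /=; rewrite negbK.
Qed.

Lemma qwt_cons a u b : qwt (a :: u) b = qform a b + qwt u b.
Proof. by rewrite /qwt big_cons. Qed.

Lemma qwt_G k b : qwt (G k) b = 0.
Proof.
elim: k => [|k IH]; first by rewrite /qwt big_nil.
by rewrite G_succ Wneg_cons !qwt_cons IH addr0; case: b {IH}.
Qed.

Lemma qwt_Gt k b : qwt (Gt k) b = 0.
Proof.
elim: k => [|k IH]; first by rewrite /qwt big_nil.
by rewrite Gt_succ Wpos1_cons !qwt_cons IH addr0; case: b {IH}.
Qed.

Lemma qwt_Wneg k b : qwt (Wneg k) b = qform false b.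
Proof. by rewrite Wneg_cons qwt_cons qwt_G addr0. Qed.

Lemma qwt_Wpos1 k b : qwt (Wpos1 k) b = qform true b.
Proof. by rewrite Wpos1_cons qwt_cons qwt_Gt addr0. Qed.

Lemma nilp_G k : nilp (G k) = (k == 0%N).
Proof. by rewrite /nilp size_mkseq muln_eq0. Qed.

Lemma nilp_Gt k : nilp (Gt k) = (k == 0%N).
Proof. by rewrite /nilp size_mkseq muln_eq0. Qed.

Lemma nilp_Wneg k : nilp (Wneg k) = false.
Proof. by rewrite Wneg_cons. Qed.

Lemma nilp_Wpos1 k : nilp (Wpos1 k) = false.
Proof. by rewrite Wpos1_cons. Qed.

Section ShuffleCoefficients.
Variables (F : fieldType) (q : F).

Lemma coefV_cat (X Y : V F) w : coefV (X ++ Y) w = coefV X w + coefV Y w.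
Proof. by rewrite /coefV big_cat. Qed.

Lemma coefV_wordV u w : coefV (wordV u) w = (u == w)%:R :> F.
Proof. by rewrite /coefV big_cons big_nil /=; case: (u == w); rewrite ?addr0. Qed.

Lemma coefV_map_cons (X : V F) (t : F) a c w :
  coefV [seq (p.1 * t, a :: p.2) | p <- X] (c :: w) = (a == c)%:R * t * coefV X w.
Proof.
rewrite /coefV big_map mulr_sumr big_mkcond [RHS]big_mkcond.
apply: eq_bigr => p _; rewrite eqseq_cons /=.
by case: (a == c); case: (p.2 == w); rewrite ?mul1r ?mul0r // mulrC.
Qed.

Lemma coefV_map_cons1 (X : V F) a c w :
  coefV [seq (p.1, a :: p.2) | p <- X] (c :: w) = (a == c)%:R * coefV X w.
Proof.
rewrite -[_%:R]mulr1 -coefV_map_cons; congr coefV.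
by apply: eq_map => p; rewrite mulr1.
Qed.

Lemma coefV_scaleV (c : F) (X : V F) w : coefV (scaleV c X) w = c * coefV X w.
Proof. by rewrite /scaleV /coefV big_map mulr_sumr. Qed.

Definition shcoef (u v w : word) : F := coefV (qsh q u v) w.

Lemma coefV_sumV_star N (e : nat -> F) (f g : nat -> word) w :
  coefV (sumV N (fun k => scaleV (e k) (starV q (wordV (f k)) (wordV (g k))))) w
  = \sum_(0 <= k < N) e k * shcoef (f k) (g k) w.
Proof.
rewrite /sumV /coefV big_flatten /= big_map /index_iota subn0.
apply: eq_bigr => k _; rewrite big_map mulr_sumr /starV /wordV /= !cats0 big_map.
by apply: eq_bigr => p _; rewrite !mul1r.
Qed.

Lemma shcoef_nil_l v w : shcoef [::] v w = (v == w)%:R.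
Proof. exact: coefV_wordV. Qed.

Lemma shcoef_nil_r u w : shcoef u [::] w = (u == w)%:R.
Proof. by case: u => [|a u]; apply: coefV_wordV. Qed.

Lemma shcoef_nil u v : shcoef u v [::] = (nilp u && nilp v)%:R.
Proof.
case: u => [|a u]; first by rewrite shcoef_nil_l; case: v.
case: v => [|b v]; first by rewrite shcoef_nil_r.
by rewrite /shcoef /= coefV_cat /coefV !big_map !big_pred0 ?addr0.
Qed.

Lemma shcoef_cons u v c w :
  shcoef u v (c :: w) =
    (ohead u == Some c)%:R * shcoef (behead u) v w
  + (ohead v == Some c)%:R * q ^ qwt u c * shcoef u (behead v) w.
Proof.
case: u => [|a u]; case: v => [|b v].
- by rewrite !shcoef_nil_l !mul0r addr0.
- rewrite !shcoef_nil_l /qwt big_nil expr0z mulr1 mul0r add0r /= eqseq_cons.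
  by case: b; case: c; case: (v == w); rewrite /= ?mul1r ?mul0r.
- rewrite !shcoef_nil_r /= !mul0r addr0 eqseq_cons.
  by case: a; case: c; case: (u == w); rewrite /= ?mul1r ?mul0r.
rewrite /shcoef /= coefV_cat coefV_map_cons1 coefV_map_cons.
by case: a; case: b; case: c; rewrite /= ?mul0r.
Qed.

Ltac expand_shcoef :=
  rewrite shcoef_cons ?qwt_G ?qwt_Gt ?qwt_Wneg ?qwt_Wpos1 ?expr0z;
  rewrite ?G_succ ?Gt_succ ?Wneg_cons ?Wpos1_cons /= ?mul0r ?mul1r ?add0r ?addr0 ?mulr1.

Lemma shcoef_G_Gt k j c w : shcoef (G k) (Gt j) (c :: w) =
  if c then (if k is k'.+1 then shcoef (Wneg k') (Gt j) w else 0)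
  else (if j is j'.+1 then shcoef (G k) (Wpos1 j') w else 0).
Proof. by case: c; case: k => [|k]; case: j => [|j]; expand_shcoef. Qed.

Lemma shcoef_Gt_G k j c w : shcoef (Gt k) (G j) (c :: w) =
  if c then (if j is j'.+1 then shcoef (Gt k) (Wneg j') w else 0)
  else (if k is k'.+1 then shcoef (Wpos1 k') (G j) w else 0).
Proof. by case: c; case: k => [|k]; case: j => [|j]; expand_shcoef. Qed.

Lemma shcoef_Wneg_Wpos1 k j c w : shcoef (Wneg k) (Wpos1 j) (c :: w) =
  if c then q ^- 2 * shcoef (Wneg k) (Gt j) w else shcoef (G k) (Wpos1 j) w.
Proof. by case: c; expand_shcoef. Qed.

Lemma shcoef_Wpos1_Wneg k j c w : shcoef (Wpos1 k) (Wneg j) (c :: w) =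
  if c then shcoef (Gt k) (Wneg j) w else q ^- 2 * shcoef (Wpos1 k) (G j) w.
Proof. by case: c; expand_shcoef. Qed.

Lemma shcoef_G_Wpos1 k j c w : shcoef (G k) (Wpos1 j) (c :: w) =
  if c then (if k is k'.+1 then shcoef (Wneg k') (Wpos1 j) w else 0)
            + shcoef (G k) (Gt j) w
  else 0.
Proof. by case: c; case: k => [|k]; expand_shcoef. Qed.

Lemma shcoef_Wpos1_G k j c w : shcoef (Wpos1 k) (G j) (c :: w) =
  if c then shcoef (Gt k) (G j) w
            + (if j is j'.+1 then q ^+ 2 * shcoef (Wpos1 k) (Wneg j') w else 0)
  else 0.
Proof. by case: c; case: j => [|j]; expand_shcoef. Qed.

Lemma shcoef_Wneg_Gt k j c w : shcoef (Wneg k) (Gt j) (c :: w) =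
  if c then 0
  else shcoef (G k) (Gt j) w
       + (if j is j'.+1 then q ^+ 2 * shcoef (Wneg k) (Wpos1 j') w else 0).
Proof. by case: c; case: j => [|j]; expand_shcoef. Qed.

Lemma shcoef_Gt_Wneg k j c w : shcoef (Gt k) (Wneg j) (c :: w) =
  if c then 0
  else (if k is k'.+1 then shcoef (Wpos1 k') (Wneg j) w else 0)
       + shcoef (Gt k) (G j) w.
Proof. by case: c; case: k => [|k]; expand_shcoef. Qed.

Lemma sum_shift_first (r : F) m (h : nat -> nat -> F) :
  \sum_(0 <= k < m.+2) r ^+ k * (if k is k'.+1 then h k' (m.+1 - k)%N else 0)
  = r * \sum_(0 <= k < m.+1) r ^+ k * h k (m - k)%N.
Proof.
rewrite big_nat_recl // mulr0 add0r mulr_sumr.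
by apply: eq_bigr => k _; rewrite exprSr subSS mulrCA mulrA.
Qed.

Lemma sum_shift_last (r : F) m (h : nat -> nat -> F) :
  \sum_(0 <= k < m.+2) r ^+ k * (if (m.+1 - k)%N is j.+1 then h k j else 0)
  = \sum_(0 <= k < m.+1) r ^+ k * h k (m - k)%N.
Proof.
rewrite big_nat_recr //= subnn mulr0 addr0.
by apply: eq_big_nat => k /andP[_ lt_km]; rewrite subSn.
Qed.

Definition qconv (r : F) (f g : nat -> word) (n : nat) (w : word) : F :=
  \sum_(0 <= k < n.+1) r ^+ k * shcoef (f k) (g (n - k)%N) w.

Lemma qconv0 r f g w : qconv r f g 0 w = shcoef (f 0%N) (g 0%N) w.
Proof. by rewrite /qconv big_nat1 mul1r. Qed.

Lemma qconv_rev r f g m w :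
  qconv r f g m w = \sum_(0 <= k < m.+1) r ^+ (m - k) * shcoef (f (m - k)%N) (g k) w.
Proof.
rewrite /qconv big_nat_rev; apply: eq_big_nat => k /andP[_ lt_km].
by rewrite add0n subSS subKn.
Qed.

Lemma qconv_nil r f g n :
  (forall k, (k <= n)%N -> ~~ (nilp (f k) && nilp (g (n - k)%N))) ->
  qconv r f g n [::] = 0.
Proof.
move=> nonempty; rewrite /qconv big_nat_cond big1 // => k /andP[/andP[_ le_kn] _].
by rewrite shcoef_nil (negbTE (nonempty k le_kn)) mulr0.
Qed.

Lemma qconv_G_Gt_cons r m c w : qconv r G Gt m.+1 (c :: w) =
  if c then r * qconv r Wneg Gt m w else qconv r G Wpos1 m w.
Proof.
rewrite /qconv; under eq_bigr => k _ do rewrite shcoef_G_Gt.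
case: c.
- exact: (sum_shift_first r m (fun a b => shcoef (Wneg a) (Gt b) w)).
- exact: (sum_shift_last r m (fun a b => shcoef (G a) (Wpos1 b) w)).
Qed.

Lemma qconv_Gt_G_cons r m c w : qconv r Gt G m.+1 (c :: w) =
  if c then qconv r Gt Wneg m w else r * qconv r Wpos1 G m w.
Proof.
rewrite /qconv; under eq_bigr => k _ do rewrite shcoef_Gt_G.
case: c.
- exact: (sum_shift_last r m (fun a b => shcoef (Gt a) (Wneg b) w)).
- exact: (sum_shift_first r m (fun a b => shcoef (Wpos1 a) (G b) w)).
Qed.

Lemma qconv_Wneg_Wpos1_cons r m c w : qconv r Wneg Wpos1 m (c :: w) =
  if c then q ^- 2 * qconv r Wneg Gt m w else qconv r G Wpos1 m w.
Proof.
rewrite /qconv; under eq_bigr => k _ do rewrite shcoef_Wneg_Wpos1.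
by case: c => //; rewrite mulr_sumr; apply: eq_bigr => k _; rewrite mulrCA.
Qed.

Lemma qconv_Wpos1_Wneg_cons r m c w : qconv r Wpos1 Wneg m (c :: w) =
  if c then qconv r Gt Wneg m w else q ^- 2 * qconv r Wpos1 G m w.
Proof.
rewrite /qconv; under eq_bigr => k _ do rewrite shcoef_Wpos1_Wneg.
by case: c => //; rewrite mulr_sumr; apply: eq_bigr => k _; rewrite mulrCA.
Qed.

Lemma qconv_G_Wpos1_cons r m c w : qconv r G Wpos1 m.+1 (c :: w) =
  if c then r * qconv r Wneg Wpos1 m w + qconv r G Gt m.+1 w else 0.
Proof.
rewrite /qconv; under eq_bigr => k _ do rewrite shcoef_G_Wpos1.
case: c; last by rewrite big1 // => k _; rewrite mulr0.
under eq_bigr => k _ do rewrite mulrDr.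
by rewrite big_split (sum_shift_first r m (fun a b => shcoef (Wneg a) (Wpos1 b) w)).
Qed.

Lemma qconv_Wpos1_G_cons r m c w : qconv r Wpos1 G m.+1 (c :: w) =
  if c then qconv r Gt G m.+1 w + q ^+ 2 * qconv r Wpos1 Wneg m w else 0.
Proof.
rewrite /qconv; under eq_bigr => k _ do rewrite shcoef_Wpos1_G.
case: c; last by rewrite big1 // => k _; rewrite mulr0.
under eq_bigr => k _ do rewrite mulrDr.
rewrite big_split (sum_shift_last r m (fun a b => q ^+ 2 * shcoef (Wpos1 a) (Wneg b) w)).
by rewrite mulr_sumr; congr (_ + _); apply: eq_bigr => k _; rewrite mulrCA.
Qed.

Lemma qconv_Wneg_Gt_cons r m c w : qconv r Wneg Gt m.+1 (c :: w) =
  if c then 0 else qconv r G Gt m.+1 w + q ^+ 2 * qconv r Wneg Wpos1 m w.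
Proof.
rewrite /qconv; under eq_bigr => k _ do rewrite shcoef_Wneg_Gt.
case: c; first by rewrite big1 // => k _; rewrite mulr0.
under eq_bigr => k _ do rewrite mulrDr.
rewrite big_split (sum_shift_last r m (fun a b => q ^+ 2 * shcoef (Wneg a) (Wpos1 b) w)).
by rewrite mulr_sumr; congr (_ + _); apply: eq_bigr => k _; rewrite mulrCA.
Qed.

Lemma qconv_Gt_Wneg_cons r m c w : qconv r Gt Wneg m.+1 (c :: w) =
  if c then 0 else r * qconv r Wpos1 Wneg m w + qconv r Gt G m.+1 w.
Proof.
rewrite /qconv; under eq_bigr => k _ do rewrite shcoef_Gt_Wneg.
case: c; first by rewrite big1 // => k _; rewrite mulr0.
under eq_bigr => k _ do rewrite mulrDr.
by rewrite big_split (sum_shift_first r m (fun a b => shcoef (Wpos1 a) (Wneg b) w)).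
Qed.

End ShuffleCoefficients.

Section ConvolutionIdentities.
Variables (F : fieldType) (q : F).

Ltac nonempty_families :=
  move=> k le_kn; rewrite ?nilp_G ?nilp_Gt ?nilp_Wneg ?nilp_Wpos1 ?andbF //; lia.

Lemma qconv_G_Gt_inv m w :
  qconv q (q ^- 2) G Gt m.+1 w = qconv q (q ^- 2) Wneg Wpos1 m w.
Proof.
case: w => [|c w]; last by rewrite qconv_G_Gt_cons qconv_Wneg_Wpos1_cons.
by rewrite !qconv_nil //; nonempty_families.
Qed.

Lemma qconv_Gt_G_inv m w :
  qconv q (q ^- 2) Gt G m.+1 w = qconv q (q ^- 2) Wpos1 Wneg m w.
Proof.
case: w => [|c w]; last by rewrite qconv_Gt_G_cons qconv_Wpos1_Wneg_cons.
by rewrite !qconv_nil //; nonempty_families.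
Qed.

Hypothesis q_neq0 : q != 0.

Lemma qconv_sq_identities w m :
  [/\ qconv q (q ^+ 2) G Wpos1 m w = qconv q (q ^+ 2) Wpos1 G m w,
      qconv q (q ^+ 2) Wneg Gt m w = qconv q (q ^+ 2) Gt Wneg m w,
      qconv q (q ^+ 2) G Gt m.+1 w = q ^+ 2 * qconv q (q ^+ 2) Wpos1 Wneg m w
    & qconv q (q ^+ 2) Gt G m.+1 w = q ^+ 2 * qconv q (q ^+ 2) Wneg Wpos1 m w].
Proof.
elim: w m => [|c w IH] m.
  by split; rewrite !qconv_nil ?mulr0 //; nonempty_families.
have cancel_sq x : q ^+ 2 * (q ^- 2 * x) = x by apply: mulVKf; rewrite expf_neq0.
split.
- case: m => [|m]; first by rewrite !qconv0 shcoef_nil_l shcoef_nil_r.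
  rewrite qconv_G_Wpos1_cons qconv_Wpos1_G_cons.
  by have [_ _ -> ->] := IH m.
- case: m => [|m]; first by rewrite !qconv0 shcoef_nil_l shcoef_nil_r.
  rewrite qconv_Wneg_Gt_cons qconv_Gt_Wneg_cons.
  by have [_ _ -> ->] := IH m.
- have [GWpos1_sym WnegGt_sym _ _] := IH m.
  rewrite qconv_G_Gt_cons qconv_Wpos1_Wneg_cons WnegGt_sym GWpos1_sym.
  by case: c; rewrite ?cancel_sq.
- have [GWpos1_sym WnegGt_sym _ _] := IH m.
  rewrite qconv_Gt_G_cons qconv_Wneg_Wpos1_cons WnegGt_sym GWpos1_sym.
  by case: c; rewrite ?cancel_sq.
Qed.

Lemma mul_exprz (a b : int) x : q ^ a * (q ^ b * x) = q ^ (a + b) * x.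
Proof. by rewrite mulrA expfzDr. Qed.

Lemma exprz_sq k : (q ^+ 2) ^+ k = q ^ (2 * k)%:Z.
Proof. by rewrite -exprM. Qed.

Lemma exprz_inv_sq k : (q ^- 2) ^+ k = q ^ (- (2 * k)%:Z).
Proof. by rewrite -exprVn -exprM -exprz_inv. Qed.

Lemma exprz_mul_shift (a b : int) x : a = 1 + b -> q ^ a * x = q * (q ^ b * x).
Proof. by move->; rewrite expfzDr // expr1z mulrA. Qed.

Lemma sum_exprz_inv (a : int) f g n w :
  \sum_(0 <= k < n.+1) q ^ (a - (2 * k)%:Z) * shcoef q (f k) (g (n - k)%N) w
  = q ^ a * qconv q (q ^- 2) f g n w.
Proof.
by rewrite /qconv mulr_sumr; apply: eq_bigr => k _; rewrite exprz_inv_sq mul_exprz.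
Qed.

Lemma sum_exprz_sq (a : int) f g n w :
  \sum_(0 <= k < n.+1) q ^ ((2 * k)%:Z + a) * shcoef q (f k) (g (n - k)%N) w
  = q ^ a * qconv q (q ^+ 2) f g n w.
Proof.
by rewrite /qconv mulr_sumr; apply: eq_bigr => k _; rewrite exprz_sq mul_exprz addrC.
Qed.

Lemma sum_exprz_inv_rev (a : int) f g m w :
  \sum_(0 <= k < m.+1) q ^ (a - (2 * k)%:Z) * shcoef q (f (m - k)%N) (g k) w
  = q ^ (a - (2 * m)%:Z) * qconv q (q ^+ 2) f g m w.
Proof.
rewrite qconv_rev mulr_sumr; apply: eq_big_nat => k /andP[_ lt_km].
rewrite exprz_sq mul_exprz; congr (q ^ _ * _); lia.
Qed.

Lemma sum_exprz_sq_rev (a : int) f g m w :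
  \sum_(0 <= k < m.+1) q ^ ((2 * k)%:Z + a) * shcoef q (f (m - k)%N) (g k) w
  = q ^ ((2 * m)%:Z + a) * qconv q (q ^- 2) f g m w.
Proof.
rewrite qconv_rev mulr_sumr; apply: eq_big_nat => k /andP[_ lt_km].
rewrite exprz_inv_sq mul_exprz; congr (q ^ _ * _); lia.
Qed.

End ConvolutionIdentities.

Theorem proposition8p1 (F : fieldType) (q : F) (n : nat) :
  q != 0 -> (forall m : nat, (0 < m)%N -> q ^+ m != 1) -> (1 <= n)%N ->
  [/\ eqV (sumV (n.+1) (fun k => scaleV (q ^ (n%:Z - (2 * k)%:Z))
                              (starV q (wordV (G k)) (wordV (Gt (n - k))))))
          (scaleV q (sumV n (fun k => scaleV (q ^ ((n - 1)%:Z - (2 * k)%:Z))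
                              (starV q (wordV (Wneg k)) (wordV (Wpos1 (n - 1 - k))))))),
      eqV (sumV (n.+1) (fun k => scaleV (q ^ ((2 * k)%:Z - n%:Z))
                              (starV q (wordV (G k)) (wordV (Gt (n - k))))))
          (scaleV q (sumV n (fun k => scaleV (q ^ ((n - 1)%:Z - (2 * k)%:Z))
                              (starV q (wordV (Wpos1 (n - 1 - k))) (wordV (Wneg k)))))),
      eqV (sumV (n.+1) (fun k => scaleV (q ^ (n%:Z - (2 * k)%:Z))
                              (starV q (wordV (Gt k)) (wordV (G (n - k))))))
          (scaleV q (sumV n (fun k => scaleV (q ^ ((2 * k + 1)%:Z - n%:Z))
                              (starV q (wordV (Wpos1 (n - 1 - k))) (wordV (Wneg k))))))
    & eqV (sumV (n.+1) (fun k => scaleV (q ^ ((2 * k)%:Z - n%:Z))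
                              (starV q (wordV (Gt k)) (wordV (G (n - k))))))
          (scaleV q (sumV n (fun k => scaleV (q ^ ((2 * k + 1)%:Z - n%:Z))
                              (starV q (wordV (Wneg k)) (wordV (Wpos1 (n - 1 - k))))))) ].
Proof.
move=> q_neq0 _; case: n => // m _; rewrite subn1 /=.
split=> w; rewrite /eqV coefV_scaleV !coefV_sumV_star.
- by rewrite !sum_exprz_inv // qconv_G_Gt_inv mulrA -exprS.
- rewrite sum_exprz_sq // sum_exprz_inv_rev //.
  have [_ _ -> _] := qconv_sq_identities q_neq0 w m.
  by rewrite (mul_exprz q_neq0 _ 2); apply: exprz_mul_shift; lia.
- under [in RHS]eq_bigr => k _ do rewrite PoszD -addrA.
  rewrite sum_exprz_inv // sum_exprz_sq_rev // qconv_Gt_G_inv.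
  by apply: exprz_mul_shift; lia.
- under [in RHS]eq_bigr => k _ do rewrite PoszD -addrA.
  rewrite !sum_exprz_sq //.
  have [_ _ _ ->] := qconv_sq_identities q_neq0 w m.
  by rewrite (mul_exprz q_neq0 _ 2); apply: exprz_mul_shift; lia.
Qed.
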